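(* Let $k\ge1$ and $n\ge k+1$ be integers. The number of (labeled) forests $F$ such that: the vertex set of $F$ is $\{1,\dots,k+1\}\cup R$ for some subset $R\subseteq\{k+2,\dots,n\}$; every tree of $F$ has at least two vertices; exactly one tree of $F$ contains no vertex of $R$, and this tree contains both vertices $1$ and $2$; and every other tree of $F$ contains exactly one vertex of $R$ (its root), is equal to $n^{k-1}$.
   Context: Forests are simple undirected acyclic graphs on the stated labeled vertex set; two forests are counted as different if their vertex sets or edge sets differ. *)

From mathcomp Require Import all_boot.
Set Implicit Arguments. Unset Strict Implicit. Unset Printing Implicit Defensive.

(* Vertex i of {1,...,n} is encoded as the ordinal i-1 : 'I_n.
   A (candidate) graph is a pair (V, E): a vertex set V and an edge set E,
   each edge being a 2-element subset of V. *)
Definition graph n := ({set 'I_n} * {set {set 'I_n}})%type.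

Section G.
Variable n : nat.
Implicit Types (G : graph n).

Definition gV G := G.1.
Definition gE G := G.2.

Definition simple_graph G : bool :=
  [forall e in gE G, (#|e| == 2) && (e \subset gV G)].

Definition adj G : rel 'I_n := fun x y => [set x; y] \in gE G.

Definition acyclic G : Prop :=
  forall s : seq 'I_n, uniq s -> 3 <= size s -> ~~ cycle (adj G) s.

Definition forest G : Prop := simple_graph G /\ acyclic G.

Definition comp G (v : 'I_n) : {set 'I_n} :=
  [set u in gV G | connect (adj G) v u].

Definition trees G : {set {set 'I_n}} := [set comp G v | v in gV G].

(* {1,...,k+1} *)
Definition low k : {set 'I_n} := [set i : 'I_n | i < k.+1].
End G.

Definition good n k (F : graph n) : Prop :=
  let R := gV F :\: low n k in
  forest F /\
  (* V = {1..k+1} ∪ R with R ⊆ {k+2..n} *)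
  low n k \subset gV F /\
  (forall T, T \in trees F -> 2 <= #|T|) /\
  (exists T0, [set T in trees F | [disjoint T & R]] = [set T0] /\
              (* vertices 1 and 2, i.e. ordinals 0 and 1 *)
              (forall v : 'I_n, val v < 2 -> v \in T0)) /\
  (forall T, T \in trees F -> ~~ [disjoint T & R] -> #|T :&: R| = 1).

Definition counts n (P : graph n -> Prop) (N : nat) : Prop :=
  exists s : seq (graph n), uniq s /\ (forall F, F \in s <-> P F) /\ size s = N.
Arguments good : clear implicits.
Arguments low : clear implicits.

(* Orient every edge of a good forest towards a root, the tree containing 1 and 2 being
   rooted at 1 and every other tree at its unique vertex of R.  The resulting parent map
   is defined exactly on 2, ..., k+1 and leads every vertex to a root, vertex 2 to vertex 1;
   conversely such a map determines its forest.  So good forests correspond to maps p on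
   {1..n} fixing every vertex outside X = {2..k+1}, whose iterates all leave X, and whose
   iterates send 2 to 1.
   Parent maps on an N-set with m prescribed roots number m N^(N-m-1): turning a non-root y
   into a root is a bijection onto the pairs (q, v) of a parent map with the m+1 roots and a
   vertex v outside the tree of y, and conjugating by transpositions of roots shows that the
   m+1 trees have the same average size.  The same symmetry equidistributes the root of 2
   among the n - k roots, which leaves n^(k-1) maps. *)

From Pilot Require Import Defs.
From mathcomp Require Import all_boot perm zify.
Set Implicit Arguments. Unset Strict Implicit. Unset Printing Implicit Defensive.

Section RootedForests.
Variable T : finType.
Local Notation N := #|T|.
Implicit Types (R : {set T}) (p q : {ffun T -> T}).

Definition fixes R p := [forall r in R, p r == r].
Definition forest_root p v := iter N p v.
(* [p] is the parent map of a forest on [T] whose roots are the elements of [R]. *)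
Definition rooted_forest R p := fixes R p && [forall v, forest_root p v \in R].
Definition rooted_forests R := [set p | rooted_forest R p].
Definition tree p r := [set v | forest_root p v == r].

Lemma fixesP R p : reflect {in R, forall r, p r = r} (fixes R p).
Proof. by apply: (iffP forall_inP) => H r /H => [/eqP|->]. Qed.

Lemma iter_fixes R p t t' v : fixes R p -> iter t p v \in R -> t <= t' ->
  iter t' p v = iter t p v.
Proof.
move=> /fixesP fx Ht le_tt'; rewrite -(subnK le_tt') iterD.
by elim: (t' - t) => //= m ->; rewrite fx.
Qed.

(* The walk stays in [R] once there, and reaches it within [order p v <= N] steps. *)
Lemma forest_root_in R p t v : fixes R p -> iter t p v \in R -> forest_root p v \in R.
Proof.
move=> fx Ht.
have c : fconnect p v (iter t p v) := fconnect_iter p t v.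
have le_order : order p v <= N.
  by rewrite -size_orbit -(card_uniqP (orbit_uniq p v)); exact: max_card.
have e : iter (findex p v (iter t p v)) p v = iter t p v := iter_findex c.
rewrite /forest_root (iter_fixes (t := findex p v (iter t p v)) fx) ?e //.
exact: ltnW (leq_trans (findex_max c) le_order).
Qed.

Lemma forest_root_fixed R p r : fixes R p -> r \in R -> forest_root p r = r.
Proof. by move=> fx rR; rewrite /forest_root (iter_fixes (t := 0) fx). Qed.

Lemma forest_root_parent R p v : rooted_forest R p ->
  forest_root p (p v) = forest_root p v.
Proof.
case/andP => fx /forallP rt.
by rewrite /forest_root -iterSr (iter_fixes fx (rt v) (leqnSn _)).
Qed.

Definition reparent p y v := [ffun w => if w == y then v else p w].

Lemma reparent_ne p y v w : w != y -> reparent p y v w = p w.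
Proof. by rewrite ffunE => /negbTE ->. Qed.

Lemma reparent_at p y v : reparent p y v y = v.
Proof. by rewrite ffunE eqxx. Qed.

Lemma iter_agree (f g : T -> T) y v t : {in predC1 y, f =1 g} ->
  (forall i, i < t -> iter i f v != y) -> iter t f v = iter t g v.
Proof.
move=> fg; elim: t => // t IH H.
by rewrite !iterS -IH => [|i lt_it]; [apply: fg; apply: H | apply: H; lia].
Qed.

Lemma iter_agree_or_hit (f g : T -> T) y v t : f y = y -> {in predC1 y, f =1 g} ->
  iter t f v = iter t g v \/ iter t f v = y.
Proof.
move=> fy fg; elim: t => [|t [IH|IH]]; [by left | | by right; rewrite iterS IH].
rewrite !iterS IH; case: (eqVneq (iter t g v) y) => [->|ne]; first by right.
by left; apply: fg.
Qed.

Lemma rooted_forest_cut R p y : y \notin R -> rooted_forest R p ->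
  rooted_forest (y |: R) (reparent p y y) &&
  (forest_root (reparent p y y) (p y) != y).
Proof.
move=> yR /andP[fxb /forallP rt]; have /fixesP fx := fxb.
set q := reparent p y y.
have qp : {in predC1 y, q =1 p} by move=> w; apply: reparent_ne.
have qy : q y = y by apply: reparent_at.
apply/andP; split; [apply/andP; split|].
- apply/fixesP => r; rewrite in_setU1 => /orP[/eqP->//|rR].
  by rewrite qp ?fx //; apply: contraNneq yR => <-.
- apply/forallP => w; rewrite /forest_root; case: (iter_agree_or_hit w N qy qp) => ->.
    by rewrite in_setU1 rt orbT.
  exact: setU11.
(* Otherwise [y] would lie on a cycle of [p], which never meets [R]. *)
apply/negP => /eqP qpy.
have hits : exists t, iter t q (p y) == y by exists N; apply/eqP.
have [t0 /eqP e0 min0] := ex_minnP hits.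
have ag : iter t0 q (p y) = iter t0 p (p y).
  by apply: (iter_agree qp) => i lt; apply/negP => /min0; lia.
have cycle_y : iter t0.+1 p y = y by rewrite iterSr -ag.
have cycle_y_m m : iter (m * t0.+1) p y = y.
  by elim: m => // m IH; rewrite mulSn iterD IH cycle_y.
have := iter_fixes fxb (rt y) (t' := N * t0.+1).
rewrite cycle_y_m => E; move: (rt y); rewrite /forest_root -E ?leq_pmulr //.
by rewrite (negbTE yR).
Qed.

Lemma rooted_forest_graft R p y v : y \notin R -> rooted_forest (y |: R) p ->
  forest_root p v != y -> rooted_forest R (reparent p y v).
Proof.
move=> yR /andP[fxb /forallP rt] rv; have /fixesP fx := fxb.
set q := reparent p y v.
have pq : {in predC1 y, p =1 q} by move=> w ne; rewrite reparent_ne.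
have fxq : fixes R q.
  apply/fixesP => r rR; rewrite -pq ?fx ?in_setU1 ?rR ?orbT //.
  by rewrite inE; apply: contraNneq yR => <-.
have v_avoids_y t : iter t p v != y.
  apply/eqP => E.
  have y1 : iter t p v \in y |: R by rewrite E setU11.
  move: rv; rewrite /forest_root -(iter_fixes fxb (rt v) (leq_maxr t N)).
  by rewrite (iter_fixes fxb y1 (leq_maxl t N)) E eqxx.
have root_in_R w : forest_root p w != y -> forest_root p w \in R.
  by have := rt w; rewrite in_setU1 => /orP[->|].
apply/andP; split => //; apply/forallP => w.
case: (boolP [exists t : 'I_N.+1, iter t q w == y]) => [/existsP[t /eqP ht]|no_hit].
  apply: (forest_root_in (t := N + t.+1) fxq).
  rewrite iterD iterS ht reparent_at -(iter_agree pq (t := N)) => [|i _].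
    exact/root_in_R/v_avoids_y.
  exact: v_avoids_y.
have no_hit' i : i < N.+1 -> iter i q w != y.
  by move=> lt; apply: contra no_hit => hit; apply/existsP; exists (Ordinal lt).
have e : iter N q w = iter N p w.
  by apply: (iter_agree (fun w ne => esym (pq w ne))) => i lt; apply/no_hit'/ltnW.
by rewrite /forest_root e; apply: root_in_R; rewrite /forest_root -e no_hit'.
Qed.

Lemma card_rooted_forests_graft R y : y \notin R ->
  #|rooted_forests R| = \sum_(p in rooted_forests (y |: R)) #|~: tree p y|.
Proof.
move=> yR.
pose pairs := [set pv : {ffun T -> T} * T |
  rooted_forest (y |: R) pv.1 && (forest_root pv.1 pv.2 != y)].
pose graft pv := reparent pv.1 y pv.2.
have graft_onto : rooted_forests R = graft @: pairs.
  apply/setP => p; rewrite inE; apply/idP/imsetP => [p_rf|[[q v]]].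
    exists (reparent p y y, p y); first by rewrite inE /= rooted_forest_cut.
    by apply/ffunP => w; rewrite !ffunE; case: (eqVneq w y) => [->|].
  by rewrite inE => /andP[q_rf qv] ->; apply: rooted_forest_graft.
have graft_inj : {in pairs &, injective graft}.
  move=> [p1 v1] [p2 v2]; rewrite !inE /= => /andP[/andP[/fixesP f1 _] _]
    /andP[/andP[/fixesP f2 _] _] e.
  have ev : v1 = v2 by move: (congr1 (fun f : {ffun T -> T} => f y) e); rewrite !reparent_at.
  congr (_, _) => //; apply/ffunP => w; case: (eqVneq w y) => [->|ne].
    by rewrite f1 ?f2 // setU11.
  by move: (congr1 (fun f : {ffun T -> T} => f w) e); rewrite /graft /= !reparent_ne.
rewrite graft_onto (card_in_imset graft_inj) -sum1dep_card.
rewrite (eq_bigl (fun pv => (pv.1 \in rooted_forests (y |: R)) &&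
                           (forest_root pv.1 pv.2 != y))); last by move=> pv; rewrite !inE.
rewrite -(pair_big_dep _ (fun p v => forest_root p v != y) (fun _ _ => 1)) /=.
by apply: eq_bigr => p _; rewrite sum1dep_card; apply: eq_card => v; rewrite !inE.
Qed.

Definition conj_forest a b p := [ffun v => tperm a b (p (tperm a b v))].

Lemma conj_forestK a b : involutive (conj_forest a b).
Proof. by move=> p; apply/ffunP => v; rewrite !ffunE !tpermK. Qed.

Lemma iter_conj_forest a b p t v :
  iter t (conj_forest a b p) v = tperm a b (iter t p (tperm a b v)).
Proof. by elim: t => [|t IH] /=; rewrite ?tpermK // IH ffunE tpermK. Qed.

Lemma tperm_in R a b v : a \in R -> b \in R -> (tperm a b v \in R) = (v \in R).
Proof. by move=> aR bR; case: tpermP => [->|->|//]; rewrite ?aR ?bR. Qed.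

Lemma rooted_forest_conj R a b p : a \in R -> b \in R ->
  rooted_forest R (conj_forest a b p) = rooted_forest R p.
Proof.
move=> aR bR.
suff imp q : rooted_forest R q -> rooted_forest R (conj_forest a b q).
  by apply/idP/idP => [/imp|/imp//]; rewrite conj_forestK.
case/andP => /fixesP fx /forallP rt; apply/andP; split.
  by apply/fixesP => r rR; rewrite ffunE fx ?tpermK // (tperm_in _ aR bR).
by apply/forallP => v; rewrite /forest_root iter_conj_forest (tperm_in _ aR bR) rt.
Qed.

Lemma tree_conj a b p r :
  tree (conj_forest a b p) (tperm a b r) = tperm a b @^-1: tree p r.
Proof.
apply/setP => v.
by rewrite !inE /forest_root iter_conj_forest (inj_eq perm_inj).
Qed.

Lemma sum_card_tree_conj R a b : a \in R -> b \in R ->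
  \sum_(p in rooted_forests R) #|tree p a| = \sum_(p in rooted_forests R) #|tree p b|.
Proof.
move=> aR bR; rewrite (reindex_inj (can_inj (conj_forestK a b))) /=.
apply: eq_big => [p|p _]; first by rewrite !inE rooted_forest_conj.
by rewrite -{2}(tpermR a b) tree_conj card_preimset //; apply: perm_inj.
Qed.

Lemma sum_eq1 R z : z \in R -> \sum_(r in R) (z == r : nat) = 1.
Proof.
move=> zR; rewrite (bigD1 z) //= eqxx big1 // => r /andP[_ ne].
by rewrite eq_sym (negbTE ne).
Qed.

Lemma sum_card_trees R p : rooted_forest R p -> \sum_(r in R) #|tree p r| = N.
Proof.
case/andP => _ /forallP rt.
rewrite (eq_bigr (fun r => \sum_v (forest_root p v == r))) => [|r _]; last first.
  by rewrite /tree -sum1dep_card big_mkcond; apply: eq_bigr => v _; case: (_ == r).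
by rewrite exchange_big /= -sum1_card; apply: eq_bigr => v _; apply: sum_eq1.
Qed.

Lemma card_rooted_forests_step R y : y \notin R ->
  #|R|.+1 * #|rooted_forests R| = #|R| * (#|rooted_forests (y |: R)| * N).
Proof.
move=> yR; set R' := y |: R; set F' := rooted_forests R'.
set S := \sum_(p in F') #|tree p y|.
have sum_S : #|R|.+1 * S = #|F'| * N.
  have -> : #|R|.+1 = #|R'| by rewrite cardsU1 yR.
  rewrite -sum_nat_const.
  rewrite -(eq_bigr _ (fun r rR' => sum_card_tree_conj rR' (setU11 y R))).
  rewrite exchange_big -sum_nat_const; apply: eq_bigr => p.
  by rewrite inE => /sum_card_trees.
have S_le : S <= #|F'| * N.
  by rewrite -sum_nat_const; apply: leq_sum => p _; apply: max_card.
have -> : #|rooted_forests R| = #|F'| * N - S.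
  rewrite (card_rooted_forests_graft yR) -sum_nat_const -sumnB => [|p _].
    by apply: eq_bigr => p _; rewrite -(cardsC (tree p y)) addKn.
  exact: max_card.
by rewrite mulnBr sum_S mulSn addKn.
Qed.

Lemma rooted_forests_setT : rooted_forests setT = [set [ffun v => v]].
Proof.
apply/setP => p; rewrite !inE; apply/idP/eqP => [/andP[/fixesP fx _]|->].
  by apply/ffunP => v; rewrite ffunE fx ?inE.
by apply/andP; split; [apply/fixesP => r _; rewrite ffunE | apply/forallP => v; rewrite inE].
Qed.

Lemma card_rooted_forests R : R != set0 ->
  #|rooted_forests R| * N = #|R| * N ^ (N - #|R|).
Proof.
move hj: (N - #|R|) => j; elim: j R hj => [|j IH] R hj R_ne0.
  have -> : R = setT by apply/eqP; rewrite eqEcard subsetT cardsT; lia.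
  by rewrite rooted_forests_setT cards1 cardsT mul1n expn0 muln1.
have /set0Pn[y] : ~: R != set0 by rewrite -card_gt0 cardsCs setCK; lia.
rewrite inE => yR.
have R_gt0 : 0 < #|R| by rewrite card_gt0.
have cR' : #|y |: R| = #|R|.+1 by rewrite cardsU1 yR.
have R'_ne0 : y |: R != set0 by apply/set0Pn; exists y; rewrite setU11.
have IH' := IH (y |: R) ltac:(rewrite cR'; lia) R'_ne0.
apply/eqP; rewrite -(eqn_pmul2l (ltn0Sn #|R|)); apply/eqP.
rewrite mulnA (card_rooted_forests_step yR) IH' cR' expnS; nia.
Qed.

Lemma card_rooted_forests_at R x r0 : x \notin R -> r0 \in R ->
  #|R| * #|[set p in rooted_forests R | forest_root p x == r0]| = #|rooted_forests R|.
Proof.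
move=> xR r0R.
pose with_root r := [set p in rooted_forests R | forest_root p x == r].
have card_with_root r : r \in R -> #|with_root r| = #|with_root r0|.
  move=> rR; rewrite -(card_preimset _ (can_inj (conj_forestK r r0))).
  apply: eq_card => p; rewrite !inE rooted_forest_conj // /forest_root.
  have rx : r != x by apply: contraNneq xR => <-.
  have r0x : r0 != x by apply: contraNneq xR => <-.
  by rewrite iter_conj_forest (tpermD rx r0x) (canF_eq (tpermK r r0)) tpermL.
rewrite -sum_nat_const -(eq_bigr _ card_with_root).
rewrite (eq_bigr (fun r => \sum_(p in rooted_forests R) (forest_root p x == r))).
  rewrite exchange_big -sum1_card; apply: eq_bigr => p.
  by rewrite inE => /andP[_ /forallP rt]; apply: sum_eq1.
by move=> r _; rewrite -sum1dep_card big_mkcondr; apply: eq_bigr => p _; case: (_ == r).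
Qed.

Lemma card_rooted_forests_with_root R x r0 : x \notin R -> r0 \in R ->
  #|[set p in rooted_forests R | forest_root p x == r0]| * N = N ^ (N - #|R|).
Proof.
move=> xR r0R; have R_gt0 : 0 < #|R| by apply/card_gt0P; exists r0.
apply/eqP; rewrite -(eqn_pmul2l R_gt0) mulnA card_rooted_forests_at //.
by rewrite card_rooted_forests //; apply/set0Pn; exists r0.
Qed.

Definition depth R p v := \sum_(t < N) (iter t p v \notin R).

Lemma depth_root R p v : fixes R p -> v \in R -> depth R p v = 0.
Proof. by move=> fx vR; apply: big1 => t _; rewrite (iter_fixes (t := 0) fx) //= vR. Qed.

Lemma depth_parent R p v : rooted_forest R p -> v \notin R ->
  depth R p v = (depth R p (p v)).+1.
Proof.
move=> /andP[fx /forallP rt] vR.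
have : 0 < N by apply/card_gt0P; exists v.
move: (rt v); rewrite /forest_root /depth; case: #|T| => // N' rt_v _.
rewrite big_ord_recl big_ord_recr /= vR add1n -iterSr rt_v addn0.
by congr _.+1; apply: eq_bigr => i _; rewrite -iterS iterSr.
Qed.

Fixpoint root_path R p m v : seq T :=
  if m is m'.+1 then (if v \in R then [::] else p v :: root_path R p m' (p v)) else [::].

Lemma root_pathP R p (e : rel T) v : rooted_forest R p ->
  (forall w, w \notin R -> e w (p w)) ->
  let s := root_path R p (depth R p v) v in
  [/\ path e v s, last v s = forest_root p v, uniq (v :: s) & nth v (v :: s) 1 = p v].
Proof.
move=> p_rf e_parent; have [fx _] := andP p_rf.
suff H m w : depth R p w = m ->
  [/\ path e w (root_path R p m w), last w (root_path R p m w) = forest_root p w,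
     uniq (w :: root_path R p m w), nth w (w :: root_path R p m w) 1 = p w
   & {in root_path R p m w, forall x, depth R p x < m}].
  by case: (H _ v erefl).
elim: m w => [|m IH] w dw /=.
  have wR : w \in R by apply: contraT => wR; move: dw; rewrite (depth_parent p_rf wR).
  by rewrite (forest_root_fixed fx wR) (fixesP _ _ fx).
have wR : w \notin R by apply/negP => wR; move: dw; rewrite (depth_root fx wR).
have dpw : depth R p (p w) = m by move: dw; rewrite (depth_parent p_rf wR) => -[].
have [IH1 IH2 IH3 _ IH5] := IH _ dpw.
rewrite (negbTE wR) /= e_parent // IH1 IH2 (forest_root_parent _ p_rf).
split=> // [|x]; last by rewrite inE => /predU1P[->|/IH5/ltnW]; rewrite ?dpw.
move: IH3 => /= ->; rewrite andbT inE negb_or; apply/andP; split.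
  by apply/eqP => E; move: dpw; rewrite -E; lia.
by apply/negP => /IH5; lia.
Qed.

End RootedForests.

Section AcyclicPaths.
Variables (T : eqType) (e : rel T).
Hypotheses (e_sym : symmetric e)
  (e_acyclic : forall s, uniq s -> 3 <= size s -> ~~ cycle e s).

(* The two paths and the edge [b a] close up into the cycle [a :: pa ++ rev (belast b pb)]. *)
Lemma acyclic_disjoint_paths a b pa pb : e a b ->
  path e a pa -> path e b pb -> last a pa = last b pb ->
  uniq (a :: pa) -> uniq (b :: pb) -> ~~ has (mem (b :: pb)) (belast a pa) ->
  size pa + size pb <= 1.
Proof.
move=> eab pa_path pb_path same_last ua ub disj.
have [last_b uniq_b] : last b pb \notin belast b pb /\ uniq (belast b pb).
  by apply/andP; rewrite -rcons_uniq -lastI.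
set q := a :: pa ++ rev (belast b pb).
have cq : cycle e q.
  rewrite /q /= rcons_cat cat_path pa_path -rev_cons same_last.
  rewrite (_ : a :: belast b pb = belast a (b :: pb)) // (_ : last b pb = last a (b :: pb)) //.
  rewrite rev_path (eq_path (e' := e)) => [|x y]; last exact: e_sym.
  by rewrite /= eab pb_path.
have uq : uniq q.
  rewrite /q -cat_cons cat_uniq ua rev_uniq uniq_b andbT has_rev; apply/hasPn => x xb.
  rewrite lastI mem_rcons inE negb_or same_last; apply/andP; split.
    by apply: contraNneq last_b => <-.
  by apply/negP => /(hasPn disj)/negP; apply; apply: mem_belast xb.
rewrite leqNgt; apply: contraTN cq => ?; apply: e_acyclic uq _.
by rewrite /q /= size_cat size_rev size_belast; lia.
Qed.

Lemma acyclic_adjacent_paths a b sa sb : e a b -> a != b ->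
  path e a sa -> path e b sb -> last a sa = last b sb ->
  uniq (a :: sa) -> uniq (b :: sb) ->
  nth a (a :: sa) 1 = b \/ nth b (b :: sb) 1 = a.
Proof.
move=> eab ab pa pb same_last ua ub.
(* Cut both paths at the first vertex [c] of [a :: sa] that lies on [b :: sb]. *)
set sA := a :: sa; set sB := b :: sb.
have hasA : has (mem sB) sA.
  by apply/hasP; exists (last a sa); [apply: mem_last | rewrite /= same_last mem_last].
set i := find (mem sB) sA; set c := nth a sA i.
have iA : i < size sA by rewrite -has_find.
have cB : c \in sB by apply: nth_find.
set j := index c sB; have jB : j < size sB by rewrite index_mem.
have take_A : a :: take i sa = rcons (take i sA) c by rewrite -take_nth.
have take_B : b :: take j sb = rcons (take j sB) c by rewrite -(nth_index b cB) -take_nth.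
move: take_A take_B; rewrite !lastI => /rcons_inj[eA lA] /rcons_inj[_ lB].
have disj : ~~ has (mem (b :: take j sb)) (take i sA).
  apply: contraFN (_ : has (mem sB) (take i sA) = false); last by rewrite has_take // ltnn.
  apply: sub_has => x xb; have xt : x \in take j.+1 sB := xb.
  exact: mem_take xt.
have := acyclic_disjoint_paths eab (take_path i pa) (take_path j pb).
rewrite lA lB eA => /(_ erefl (take_uniq i.+1 ua) (take_uniq j.+1 ub) disj).
have le_i : i <= size sa by rewrite -ltnS.
have le_j : j <= size sb by rewrite -ltnS.
rewrite !size_takel // => small.
have cB' : nth b sB j = c by apply: nth_index.
have cA : nth a sA i = c by [].
clearbody c i j.
case: i j small cA cB' {iA jB eA lA lB disj le_i le_j} => [|[|?]] [|[|?]] //= _ cA cB'.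
- by rewrite cA cB' eqxx in ab.
- by right; rewrite cA cB'.
- by left; rewrite cA cB'.
Qed.

End AcyclicPaths.

Lemma eq_set2 (T : finType) (a b c d : T) : [set a; b] = [set c; d] ->
  (a = c /\ b = d) \/ (a = d /\ b = c).
Proof.
move=> e.
have /set2P ha : a \in [set c; d] by rewrite -e set21.
have /set2P hb : b \in [set c; d] by rewrite -e set22.
have /set2P hc : c \in [set a; b] by rewrite e set21.
have /set2P hd : d \in [set a; b] by rewrite e set22.
by case: ha hb hc hd => ? [] ? [] ? [] ?; subst; auto.
Qed.

Lemma adj_sym n (G : graph n) : symmetric (adj G).
Proof. by move=> x y; rewrite /adj setUC. Qed.

Section GoodForests.
Variables (n k : nat).
Hypotheses (hk : 1 <= k) (hn : k.+1 <= n).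

Definition vertex1 : 'I_n := Ordinal (leq_ltn_trans (leq0n k) hn).
Definition vertex2 : 'I_n := Ordinal (leq_ltn_trans hk hn).

(* The vertices 2, ..., k+1, i.e. those that have a parent in a good forest. *)
Definition nonroots : {set 'I_n} := [set i : 'I_n | 0 < i <= k].
Definition roots : {set 'I_n} := ~: nonroots.

Definition forest_of (p : {ffun 'I_n -> 'I_n}) : graph n :=
  (low n k :|: p @: nonroots, [set [set v; p v] | v in nonroots]).

Lemma nonroots_low : nonroots \subset low n k.
Proof. by apply/subsetP => v; rewrite !inE => /andP[_]; rewrite ltnS. Qed.

Lemma vertex1_root : vertex1 \in roots.
Proof. by rewrite !inE. Qed.

Lemma vertex2_nonroot : vertex2 \in nonroots.
Proof. by rewrite !inE /=. Qed.

Lemma vertex1_low : vertex1 \in low n k.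
Proof. by rewrite !inE. Qed.

Lemma low_cases v : v \in low n k -> v \in nonroots \/ v = vertex1.
Proof.
rewrite !inE ltnS => ->; rewrite andbT lt0n.
by have [v0|] := eqVneq (val v) 0; [right; apply: val_inj | left].
Qed.

Lemma low_root v : v \in low n k -> v \in roots -> v = vertex1.
Proof. by case/low_cases => [vX|//]; rewrite in_setC vX. Qed.

Section Forward.
Variable p : {ffun 'I_n -> 'I_n}.
Hypotheses (p_rf : rooted_forest roots p) (root2 : forest_root p vertex2 = vertex1).

Local Notation V := (low n k :|: p @: nonroots).
Local Notation R := (V :\: low n k).
Local Notation G := (forest_of p).
Local Notation root := (forest_root p).

Lemma parent_root r : r \in roots -> p r = r.
Proof. by move=> rR; case/andP: p_rf => /fixesP ->. Qed.

Lemma root_roots v : root v \in roots.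
Proof. by case/andP: p_rf => _ /forallP; apply. Qed.

Lemma root_root r : r \in roots -> root r = r.
Proof. by case/andP: p_rf => fx _; apply: forest_root_fixed. Qed.

Lemma parent_nonroot v : v \in nonroots -> p v != v.
Proof.
move=> vX; apply: contraTneq (root_roots v) => pv.
rewrite /forest_root (_ : iter _ p v = v) ?in_setC ?negbK //.
by elim: #|'I_n| => //= m ->.
Qed.

Lemma parent_vertex w : w \in V -> p w \in V.
Proof.
have [wX _ | wR] := boolP (w \in nonroots); first by rewrite inE imset_f ?orbT.
by rewrite parent_root // inE.
Qed.

Lemma root_vertex v : v \in V -> root v \in V.
Proof. by rewrite /forest_root; elim: #|'I_n| => //= m IH /IH /parent_vertex. Qed.

Lemma adj_forest_ofP a b :
  adj G a b -> (a \in nonroots /\ b = p a) \/ (b \in nonroots /\ a = p b).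
Proof. by case/imsetP => w wX /eq_set2[[-> ->]|[-> ->]]; [left|right]. Qed.

Lemma adj_forest_of_parent v : v \in nonroots -> adj G v (p v).
Proof. by move=> vX; apply/imsetP; exists v. Qed.

Lemma connect_forest_of a b : connect (adj G) a b = (root a == root b).
Proof.
have root_adj x y : adj G x y -> root x = root y.
  by case/adj_forest_ofP => -[_ ->]; rewrite (forest_root_parent _ p_rf).
have to_root v : connect (adj G) v (root v).
  rewrite /forest_root; elim: #|'I_n| => [|t IH] /=; first exact: connect0.
  have [iX | iR] := boolP (iter t p v \in nonroots); last by rewrite parent_root // in_setC.
  exact: connect_trans IH (connect1 (adj_forest_of_parent iX)).
apply/idP/eqP => [/connectP[s]|eq_root].
  by elim: s a => [|c s IH] a /= => [_ ->|/andP[/root_adj -> /IH]].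
apply: connect_trans (to_root a) _; rewrite eq_root (sym_connect_sym (@adj_sym n G)).
exact: to_root.
Qed.

Lemma comp_forest_of v : Defs.comp G v = [set u in V | root u == root v].
Proof. by apply/setP => u; rewrite !inE connect_forest_of eq_sym. Qed.

Lemma mem_comp_forest_of u v : u \in V -> root u = root v -> u \in Defs.comp G v.
Proof. by move=> uV ruv; rewrite comp_forest_of inE uV ruv eqxx. Qed.

Lemma forest_of_R_root u : u \in R -> u \in roots.
Proof. by case/setDP => _; rewrite in_setC; apply: contra; apply: (subsetP nonroots_low). Qed.

Lemma forest_of_root_cases w : w \in V -> w \in roots -> w = vertex1 \/ w \in R.
Proof.
move=> wV wR; have [wl | wl] := boolP (w \in low n k); first by left; apply: low_root.
by right; rewrite inE wl.
Qed.

Lemma simple_forest_of : simple_graph G.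
Proof.
apply/forall_inP => _ /imsetP[v vX ->].
rewrite cards2 (eq_sym v) parent_nonroot //=; apply/subsetP => w /set2P[]->.
  by rewrite inE (subsetP nonroots_low).
by rewrite inE imset_f ?orbT.
Qed.

(* On a cycle, a vertex of maximal depth has both cycle neighbours equal to its parent. *)
Lemma acyclic_forest_of : acyclic G.
Proof.
move=> s us hs; apply/negP => cs.
have [x0 x0s] : exists x0, x0 \in s.
  by case: s {us cs} hs => // x s' _; exists x; rewrite mem_head.
have [v vs vmax] := @arg_maxnP _ x0 (mem s) (depth roots p) x0s.
have [i t e] := rot_to vs.
have ct : cycle (adj G) (v :: t) by rewrite -e rot_cycle.
have ut : uniq (v :: t) by rewrite -e rot_uniq.
have t_s x : x \in t -> x \in s by move=> xt; rewrite -(mem_rot i) e inE xt orbT.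
have t_size : 1 < size t by move: hs; rewrite -(size_rot i) e /=.
clear e; case: t ct ut t_size t_s => [|b [|c t']] // ct ut _ t_s.
move: ct; rewrite /= rcons_path => /andP[vb /andP[_ /andP[_ ca]]].
set a := last c t' in ca.
have ab : a != b.
  by case/andP: ut => _ /andP[bt _]; apply: contraNneq bt => <-; apply: mem_last.
have no_child x : x \in nonroots -> p x = v -> x \in s -> False.
  move=> xX pxv /vmax; rewrite (depth_parent (v := x) p_rf) ?in_setC ?negbK // pxv.
  lia.
case: (adj_forest_ofP vb) => [[_ bv] | [bX vb']]; last first.
  by apply: (no_child b bX (esym vb')); apply: t_s; rewrite mem_head.
case: (adj_forest_ofP ca) => [[aX va] | [_ av]].
  by apply: (no_child a aX (esym va)); apply: t_s; rewrite inE mem_last orbT.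
by move/eqP: ab; apply; rewrite av bv.
Qed.

Lemma comp_forest_of_nontrivial v : v \in V -> 2 <= #|Defs.comp G v|.
Proof.
move=> vV; suff [u uc uv] : exists2 u, u \in Defs.comp G v & u != v.
  rewrite (cardsD1 v) mem_comp_forest_of // add1n ltnS card_gt0.
  by apply/set0Pn; exists u; rewrite in_setD1 uv.
case/setUP: (vV) => [/low_cases[vX|->]|/imsetP[w wX ->]].
- exists (root v); first by rewrite mem_comp_forest_of ?root_vertex // root_root ?root_roots.
  by apply: contraTneq (root_roots v) => ->; rewrite in_setC negbK.
- exists vertex2; last by apply/eqP => /(congr1 val).
  rewrite mem_comp_forest_of ?root2 ?root_root ?vertex1_root //.
  by rewrite inE (subsetP nonroots_low _ vertex2_nonroot).
- exists w; last by rewrite eq_sym parent_nonroot.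
  rewrite mem_comp_forest_of ?(forest_root_parent _ p_rf) //.
  by rewrite inE (subsetP nonroots_low _ wX).
Qed.

Lemma forest_of_R_free_trees :
  [set T in trees G | [disjoint T & R]] = [set Defs.comp G vertex1].
Proof.
have v1V : vertex1 \in V by rewrite inE vertex1_low.
apply/setP => T; rewrite !inE; apply/andP/eqP => [[/imsetP[v vV ->] dj] | ->].
  have rv := mem_comp_forest_of (root_vertex vV) (root_root (root_roots v)).
  case: (forest_of_root_cases (root_vertex vV) (root_roots v)) => [r1|rR].
    by rewrite !comp_forest_of r1 (root_root vertex1_root).
  by rewrite (disjointFr dj rv) in rR.
split; first exact: imset_f.
rewrite disjoints_subset; apply/subsetP => u; rewrite comp_forest_of inE => /andP[uV ru].
rewrite in_setC; apply: contraTN ru => uR.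
rewrite root_root ?forest_of_R_root // root_root ?vertex1_root //.
by apply: contraNneq (setDP uR).2 => ->; apply: vertex1_low.
Qed.

Lemma forest_of_R_single v : #|Defs.comp G v :&: R| <= 1.
Proof.
apply/card_le1_eqP => u w /setIP[+ uR] /setIP[+ wR].
rewrite !comp_forest_of !inE => /andP[_ /eqP ru] /andP[_ /eqP rw].
by rewrite -(root_root (forest_of_R_root uR)) -(root_root (forest_of_R_root wR)) ru rw.
Qed.

Lemma good_forest_of : good n k G.
Proof.
split; first by split; [apply: simple_forest_of | apply: acyclic_forest_of].
split; first exact: subsetUl.
split; first by move=> T /imsetP[v vV ->]; apply: comp_forest_of_nontrivial.
split.
  exists (Defs.comp G vertex1); split; first exact: forest_of_R_free_trees.
  move=> v v_lt2; have [-> | ->] : v = vertex1 \/ v = vertex2.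
    by case: v v_lt2 => [[|[|?]] ?] //= _; [left | right]; apply: val_inj.
    by apply: mem_comp_forest_of; rewrite ?inE ?vertex1_low.
  apply: mem_comp_forest_of; rewrite ?root2 ?root_root ?vertex1_root //.
  by rewrite inE (subsetP nonroots_low _ vertex2_nonroot).
move=> T /imsetP[v vV ->]; rewrite -setI_eq0 -card_gt0 => ne.
by apply/eqP; rewrite eqn_leq ne forest_of_R_single.
Qed.

End Forward.

Lemma parent_no_2cycle p v : rooted_forest roots p -> v \in nonroots -> p v \in nonroots ->
  p (p v) != v.
Proof.
move=> p_rf vX pvX; apply/eqP => ppv.
have orbit t : iter t p v \in [set v; p v].
  elim: t => [|t]; first by rewrite set21.
  by rewrite iterS => /set2P[]->; rewrite ?ppv ?set21 ?set22.
have /set2P[] := orbit #|'I_n| => root_v; have := root_roots p_rf v;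
  by rewrite /forest_root root_v in_setC ?vX ?pvX.
Qed.

(* By induction on the depth of [v]: the edge [{v, p v}] of [forest_of q] is [{v, q v}],
   as otherwise [v = q (p v) = p (p v)]. *)
Lemma forest_of_inj p q : rooted_forest roots p -> rooted_forest roots q ->
  forest_of p = forest_of q -> p = q.
Proof.
move=> p_rf q_rf pq; apply/ffunP => v.
elim: {v}(depth roots p v) {-2}v (leqnn (depth roots p v)) => [|d IH] v.
  have [vX | vR] := boolP (v \in nonroots); last by rewrite !parent_root ?in_setC.
  by rewrite (depth_parent p_rf) ?in_setC ?negbK.
have [vX | vR] := boolP (v \in nonroots); last by rewrite !parent_root ?in_setC.
rewrite (depth_parent p_rf) ?in_setC ?negbK // ltnS => /IH qpv.
have : [set v; p v] \in gE (forest_of q) by rewrite -pq; apply: imset_f.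
case/imsetP => w wX /eq_set2[[<- ->] // | [vqw pvw]].
have := parent_no_2cycle p_rf vX; rewrite pvw => /(_ wX).
by move: qpv; rewrite pvw -vqw => ->; rewrite eqxx.
Qed.

Section Backward.
Variables (F : graph n) (T0 : {set 'I_n}).
Local Notation V := (gV F).
Local Notation R := (gV F :\: low n k).
Local Notation A := (adj F).
Local Notation C := (Defs.comp F).
Hypotheses (F_simple : simple_graph F) (F_acyclic : acyclic F) (F_low : low n k \subset V)
  (F_trees : forall T, T \in trees F -> 2 <= #|T|)
  (F_free : [set T in trees F | [disjoint T & R]] = [set T0])
  (T0_12 : forall v : 'I_n, val v < 2 -> v \in T0)
  (F_single : forall T, T \in trees F -> ~~ [disjoint T & R] -> #|T :&: R| = 1).

Lemma adjF a b : A a b -> [/\ a \in V, b \in V & a != b].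
Proof.
move=> ab; have /andP[/eqP c2 /subsetP sub] := forall_inP F_simple _ ab.
by rewrite cards2 in c2; rewrite !sub ?set21 ?set22 //; case: (a != b) c2.
Qed.

Lemma nonrootsF v : v \in nonroots -> v \in V.
Proof. by move/(subsetP nonroots_low)/(subsetP F_low). Qed.

Lemma vertex1F : vertex1 \in V.
Proof. exact: subsetP F_low _ vertex1_low. Qed.

Lemma comp_self v : v \in V -> v \in C v.
Proof. by move=> vV; rewrite inE vV connect0. Qed.

Lemma comp_eq u v : u \in C v -> C u = C v.
Proof.
case/setIdP => _ vu; apply/setP => w; rewrite !inE.
by rewrite (same_connect (sym_connect_sym (@adj_sym n F)) vu).
Qed.

Lemma mem_comp_adj a b : A a b -> b \in C a.
Proof. by move=> ab; case: (adjF ab) => _ bV _; rewrite inE bV connect1. Qed.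

Lemma T0_comp1 : T0 = C vertex1.
Proof.
have : T0 \in [set T0] by rewrite set11.
rewrite -F_free inE => /andP[/imsetP[x xV eT0] _].
have : vertex1 \in T0 by apply: T0_12.
by rewrite eT0 => /comp_eq ->.
Qed.

Lemma comp1_R_free : [disjoint C vertex1 & R].
Proof. by have : T0 \in [set T0] := set11 T0; rewrite -F_free T0_comp1 inE => /andP[]. Qed.

Lemma comp_R_free v : v \in V -> [disjoint C v & R] -> C v = C vertex1.
Proof.
move=> vV dj; rewrite -T0_comp1; apply/set1P.
by rewrite -F_free inE dj andbT imset_f.
Qed.

Lemma comp2 : C vertex2 = C vertex1.
Proof. by apply: comp_eq; rewrite -T0_comp1; apply: T0_12. Qed.

(* The default [vertex1] is the root of the tree avoiding R. *)
Definition tree_root v := odflt vertex1 [pick r in C v :&: R].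

Lemma tree_root_comp v : v \in V -> tree_root v \in C v.
Proof.
move=> vV; rewrite /tree_root; case: pickP => [r /setIP[] //|none] /=.
have dj : [disjoint C v & R] by rewrite -setI_eq0; apply/eqP/setP => x; rewrite none inE.
by rewrite (comp_R_free vV dj) comp_self ?vertex1F.
Qed.

Lemma tree_root_eq u v : u \in C v -> tree_root u = tree_root v.
Proof. by move=> uc; rewrite /tree_root (comp_eq uc). Qed.

Lemma tree_root_roots v : tree_root v \in roots.
Proof.
rewrite /tree_root; case: pickP => [r /setIP[_ /setDP[_ rl]]|_]; last exact: vertex1_root.
by rewrite in_setC; apply: contra rl; apply: (subsetP nonroots_low).
Qed.

Lemma tree_root_id w : w \in V -> w \in roots -> tree_root w = w.
Proof.
move=> wV wR; have [wl | wl] := boolP (w \in low n k).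
  rewrite (low_root wl wR) /tree_root; case: pickP => [r /setIP[rc rR]|//].
  by rewrite (disjointFr comp1_R_free rc) in rR.
have wRR : w \in C w :&: R by rewrite inE comp_self // inE wl.
have [x Cx] : exists x, C w :&: R = [set x].
  apply/cards1P/eqP/F_single; first exact: imset_f.
  by rewrite -setI_eq0; apply/set0Pn; exists w.
rewrite /tree_root; case: pickP => [r|/(_ w)]; last by rewrite wRR.
by move: wRR; rewrite Cx => /set1P-> /set1P.
Qed.

Lemma tree_root2 : tree_root vertex2 = vertex1.
Proof.
by rewrite (tree_root_eq (_ : vertex2 \in C vertex1)) ?tree_root_id ?vertex1F ?vertex1_root
  // -comp2 comp_self ?nonrootsF ?vertex2_nonroot.
Qed.

Definition reaches_root_in v m :=
  [exists s : m.-tuple 'I_n, path A v s && (last v s == tree_root v)].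

Definition dist v := find (reaches_root_in v) (iota 0 n).

Lemma dist_spec v : v \in V -> reaches_root_in v (dist v) /\ dist v < n.
Proof.
move=> vV; have /setIdP[_] := tree_root_comp vV.
case/connectP => s s_path s_last; move: s_last.
case: (shortenP s_path) => s' s'_path s'_uniq _ s'_last.
have s'_lt : size s' < n.
  by have := max_card (mem (v :: s')); rewrite card_ord (card_uniqP s'_uniq).
have has_dist : has (reaches_root_in v) (iota 0 n).
  apply/hasP; exists (size s'); first by rewrite mem_iota.
  by apply/existsP; exists (in_tuple s'); rewrite /= s'_path -s'_last eqxx.
have dist_lt : dist v < n by rewrite -[X in _ < X](size_iota 0) -has_find.
by split => //; move: (nth_find 0 has_dist); rewrite nth_iota.
Qed.

Lemma dist_min v m : m < n -> reaches_root_in v m -> dist v <= m.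
Proof.
move=> lt_mn Pm; rewrite leqNgt; apply/negP => lt_m.
by have := before_find 0 lt_m; rewrite nth_iota // add0n Pm.
Qed.

Lemma dist_step v : v \in V -> v != tree_root v -> exists2 u, A v u & dist u < dist v.
Proof.
move=> vV v_root; case: (dist_spec vV) => /existsP[s /andP[s_path /eqP s_last]] dist_lt.
have s_size := size_tuple s.
case: (tval s) s_path s_last s_size => [_ /= v_eq|u s' /= /andP[vu s'_path] s'_last s_size].
  by rewrite -v_eq eqxx in v_root.
exists u => //; rewrite -s_size; apply: dist_min; first by rewrite -ltnS s_size ltnW.
apply/existsP; exists (in_tuple s').
by rewrite /= s'_path s'_last (tree_root_eq (mem_comp_adj vu)) eqxx.
Qed.

Definition parent_of : {ffun 'I_n -> 'I_n} :=
  [ffun v => if v \in nonroots then odflt v [pick u | A v u && (dist u < dist v)] else v].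

Lemma parent_of_root v : v \in roots -> parent_of v = v.
Proof. by rewrite ffunE in_setC => /negbTE ->. Qed.

Lemma parent_of_nonroot v : v \in nonroots ->
  A v (parent_of v) /\ dist (parent_of v) < dist v.
Proof.
move=> vX; rewrite ffunE vX; case: pickP => [u /andP[]//|none].
have v_root : v != tree_root v.
  by apply: contraTneq (tree_root_roots v) => <-; rewrite in_setC negbK.
have [u vu du] := dist_step (nonrootsF vX) v_root.
by move: (none u); rewrite vu du.
Qed.

Lemma parent_of_comp v : v \in V -> parent_of v \in C v.
Proof.
move=> vV; have [vX | vR] := boolP (v \in nonroots).
  exact/mem_comp_adj/(parent_of_nonroot vX).1.
by rewrite parent_of_root ?in_setC // comp_self.
Qed.

Lemma iter_parent_of_comp v t : v \in V -> iter t parent_of v \in C v.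
Proof.
move=> vV; elim: t => [|t IH]; first exact: comp_self.
by rewrite iterS -(comp_eq IH) parent_of_comp //; case/setIdP: IH.
Qed.

Lemma parent_of_reaches_root v : exists t, iter t parent_of v \in roots.
Proof.
elim: {v}(dist v) {-2}v (leqnn (dist v)) => [|d IH] v dv;
  (have [vX|vR] := boolP (v \in nonroots); last by exists 0; rewrite in_setC);
  have [_ du] := parent_of_nonroot vX; first lia.
have [t ht] := IH (parent_of v) ltac:(lia).
by exists t.+1; rewrite iterSr.
Qed.

Lemma rooted_forest_parent_of : rooted_forest roots parent_of.
Proof.
have fx : fixes roots parent_of by apply/fixesP => r; apply: parent_of_root.
apply/andP; split => //; apply/forallP => v.
by have [t] := parent_of_reaches_root v; apply: forest_root_in.
Qed.

Lemma root_parent_of v : v \in V -> forest_root parent_of v = tree_root v.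
Proof.
move=> vV; have root_comp := iter_parent_of_comp #|'I_n| vV.
have /setIdP[rootV _] := root_comp.
rewrite -(tree_root_eq root_comp) tree_root_id //.
by case/andP: rooted_forest_parent_of => _ /forallP; apply.
Qed.

Lemma root_parent_of2 : forest_root parent_of vertex2 = vertex1.
Proof. by rewrite root_parent_of ?tree_root2 ?nonrootsF ?vertex2_nonroot. Qed.

(* The root paths of two adjacent vertices end at the same root, so by acyclicity one of
   them starts with the edge between them. *)
Lemma adj_parent_ofP a b : A a b ->
  (a \in nonroots /\ b = parent_of a) \/ (b \in nonroots /\ a = parent_of b).
Proof.
move=> ab; have [aV bV a_b] := adjF ab.
have e_parent w : w \notin roots -> A w (parent_of w).
  by rewrite in_setC negbK => /parent_of_nonroot[].
have [pa la ua na] := root_pathP a rooted_forest_parent_of e_parent.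
have [pb lb ub nb] := root_pathP b rooted_forest_parent_of e_parent.
have same_root : forest_root parent_of a = forest_root parent_of b.
  by rewrite !root_parent_of // (tree_root_eq (mem_comp_adj ab)).
have := acyclic_adjacent_paths (@adj_sym n F) F_acyclic ab a_b pa pb.
rewrite la lb na nb => /(_ same_root ua ub) [ba|ab'].
  left; split => //; apply: contraTT a_b; rewrite -in_setC => /parent_of_root pa_a.
  by rewrite -ba pa_a eqxx.
right; split => //; apply: contraTT a_b; rewrite -in_setC => /parent_of_root pb_b.
by rewrite -ab' pb_b eqxx.
Qed.

Lemma exists_adjF w : w \in V -> exists z, A w z.
Proof.
move=> wV; have := F_trees (imset_f C wV).
rewrite (cardsD1 w) comp_self // add1n ltnS card_gt0 => /set0Pn[u].
rewrite in_setD1 inE => /and3P[uw _ /connectP[[|z s] /=]]; last by case/andP; exists z.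
by move=> _ u_w; rewrite u_w eqxx in uw.
Qed.

Lemma vertices_parent_of : low n k :|: parent_of @: nonroots = V.
Proof.
apply/setP => w; apply/setUP/idP => [[/(subsetP F_low) // | /imsetP[x xX ->]] | wV].
  by have /setIdP[] := parent_of_comp (nonrootsF xX).
have [wl | wl] := boolP (w \in low n k); [by left | right].
have [z /adj_parent_ofP[[wX _] | [zX ->]]] := exists_adjF wV; last exact: imset_f.
by rewrite (subsetP nonroots_low _ wX) in wl.
Qed.

Lemma edges_parent_of : [set [set v; parent_of v] | v in nonroots] = gE F.
Proof.
apply/setP => e; apply/imsetP/idP => [[v vX ->] | eE]; first by case: (parent_of_nonroot vX).
have /andP[/cards2P[a [b [_ e_ab]]] _] := forall_inP F_simple _ eE; subst e.
case: (adj_parent_ofP eE) => [[aX ->] | [bX ->]]; first by exists a.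
by exists b; rewrite // setUC.
Qed.

Lemma forest_of_parent_of : forest_of parent_of = F.
Proof. by rewrite /forest_of vertices_parent_of edges_parent_of; case: F. Qed.

End Backward.

Definition good_parent_maps :=
  [set p in rooted_forests roots | forest_root p vertex2 == vertex1].

Lemma good_forest_ofP F :
  good n k F <-> exists2 p, p \in good_parent_maps & forest_of p = F.
Proof.
split=> [[[F_simple F_acyclic] [F_low [F_trees [[T0 [F_free T0_12]] F_single]]]] | [p]].
  exists (parent_of F).
    by rewrite !inE (rooted_forest_parent_of F_simple F_low F_free T0_12)
               (root_parent_of2 F_simple F_low F_free T0_12 F_single).
  exact: (forest_of_parent_of F_simple F_acyclic F_low F_trees F_free).
by rewrite !inE => /andP[p_rf /eqP root2] <-; apply: good_forest_of.
Qed.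

Lemma card_nonroots : #|nonroots| = k.
Proof.
pose succ (j : 'I_k) : 'I_n := Ordinal (leq_ltn_trans (ltn_ord j) hn).
have -> : nonroots = succ @: setT.
  apply/setP => i; rewrite inE; apply/idP/imsetP => [/andP[i_gt0 i_le] | [j _ ->]].
    have i_pred : i.-1 < k by lia.
    by exists (Ordinal i_pred) => //; apply: val_inj => /=; lia.
  by rewrite /= ltn_ord.
by rewrite card_imset ?cardsT ?card_ord // => i j /(congr1 val) [] /val_inj.
Qed.

Lemma card_good_parent_maps : #|good_parent_maps| = n ^ k.-1.
Proof.
have vertex2_root : vertex2 \notin roots by rewrite in_setC negbK vertex2_nonroot.
have := card_rooted_forests_with_root vertex2_root vertex1_root.
have card_roots : #|roots| = n - k by rewrite cardsCs setCK card_ord card_nonroots.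
rewrite card_ord card_roots (_ : n - (n - k) = k); last by lia.
by rewrite -(prednK hk) expnSr => /eqP; rewrite eqn_mul2r gtn_eqF ?(leq_trans _ hn) // => /eqP.
Qed.

End GoodForests.

Theorem theorem5p16 (k n : nat) (hk : 1 <= k) (hn : k.+1 <= n) :
  counts (good n k) (n ^ k.-1).
Proof.
exists (map (forest_of k) (enum (good_parent_maps hk hn))); split; [|split].
- rewrite map_inj_in_uniq ?enum_uniq // => p q.
  rewrite !mem_enum !inE => /andP[p_rf _] /andP[q_rf _].
  exact: forest_of_inj.
- move=> F; rewrite (good_forest_ofP hk hn).
  split=> [/mapP[p] | [p p_good <-]]; last by apply: map_f; rewrite mem_enum.
  by rewrite mem_enum => p_good ->; exists p.
- by rewrite size_map -cardE card_good_parent_maps.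
Qed.
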